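(* Assume Condition (C) and $\lambda/2<h<\lambda$. If $\eta\in\mathcal M_{n^+_c}$ contains a full column (or a full row) of $\Lambda$ on which all spins are $0$, then $\eta$ is not a minimizer of $H$ on $\mathcal M_{n^+_c}$.
   Context: Let $\Lambda=\{1,\dots,L\}^2$, $\mathcal X=\{-1,0,+1\}^\Lambda$, $\partial^-\Lambda$ the sites of $\Lambda$ with a nearest neighbour outside $\Lambda$. Hamiltonian: $H(\eta)=\frac J2\sum_{i,j\in\Lambda,|i-j|=1}[\eta(i)-\eta(j)]^2+J\sum_{i\in\partial^-\Lambda}\sum_{j\notin\Lambda,|i-j|=1}\eta(i)^2-\lambda\sum_{i}\eta(i)^2-h\sum_i\eta(i)$. Condition (C): $J$ sufficiently large compared to $\lambda,h>0$; $L>(2J/(\lambda-h))^3$; none of $\tfrac{2J}{\lambda+h},\tfrac{2J}{\lambda-h},\tfrac{2J+\lambda-h}{\lambda+h},\tfrac{J+\lambda+h}{h}$ is an integer. Let $l_c=\lfloor\frac{2J+\lambda-h}{2h}\rfloor+1$ and $n^+_c=l_c(l_c-1)$. For $n\ge0$, $\mathcal M_n$ is the set of configurations with exactly $n$ sites of spin $+1$. *)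

From mathcomp Require Import all_boot all_order all_algebra.
From mathcomp Require Import reals.
Set Implicit Arguments. Unset Strict Implicit. Unset Printing Implicit Defensive.
Import Order.TTheory GRing.Theory Num.Theory.
Local Open Scope ring_scope.

(* Lambda = {1,...,L}^2; a site is encoded by a pair of ordinals (a,b)
   standing for the point (a+1, b+1) of Z^2. *)
Definition site (L : nat) := ('I_L * 'I_L)%type.

Definition pos (L : nat) (i : site L) : int * int :=
  ((nat_of_ord i.1)%:Z + 1, (nat_of_ord i.2)%:Z + 1).

Definition inLam (L : nat) (p : int * int) : bool :=
  (1 <= p.1 <= L%:Z) && (1 <= p.2 <= L%:Z).

Definition nbrs (p : int * int) : seq (int * int) :=
  [:: (p.1 + 1, p.2); (p.1 - 1, p.2); (p.1, p.2 + 1); (p.1, p.2 - 1)].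

Definition adj (L : nat) (i j : site L) : bool :=
  (`|(pos i).1 - (pos j).1| + `|(pos i).2 - (pos j).2| == 1).

Definition n_out (L : nat) (i : site L) : nat :=
  count (fun q => ~~ inLam L q) (nbrs (pos i)).

Definition inner_bd (L : nat) (i : site L) : bool := (0 < n_out i)%N.

Definition is_config (L : nat) (eta : site L -> int) : Prop :=
  forall i, eta i \in [:: -1; 0; 1].

Definition Ham (R : realType) (J lam h : R) (L : nat) (eta : site L -> int) : R :=
  J / 2 * (\sum_(i : site L) \sum_(j : site L | adj i j) ((eta i - eta j) ^+ 2)%:~R)
  + J * (\sum_(i : site L | inner_bd i)
           \sum_(q <- nbrs (pos i) | ~~ inLam L q) ((eta i) ^+ 2)%:~R)
  - lam * (\sum_(i : site L) ((eta i) ^+ 2)%:~R)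
  - h * (\sum_(i : site L) (eta i)%:~R).

Definition n_plus (L : nat) (eta : site L -> int) : nat :=
  #|[pred i : site L | eta i == 1]|.

Definition in_M (L : nat) (n : int) (eta : site L -> int) : Prop :=
  is_config eta /\ (n_plus eta)%:Z = n.

Definition is_minimizer (R : realType) (J lam h : R) (L : nat) (n : int)
    (eta : site L -> int) : Prop :=
  in_M n eta /\ forall zeta : site L -> int, in_M n zeta -> Ham J lam h eta <= Ham J lam h zeta.

Definition l_c (R : realType) (J lam h : R) : int :=
  Num.floor ((2 * J + lam - h) / (2 * h)) + 1.

Definition n_c_plus (R : realType) (J lam h : R) : int :=
  l_c J lam h * (l_c J lam h - 1).

(* arithmetic part of Condition (C) (the "J sufficiently large" part is
   expressed by an existential threshold in the statement) *)
Definition cond_C (R : realType) (J lam h : R) (L : nat) : Prop :=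
  [/\ 0 < lam, 0 < h & (2 * J / (lam - h)) ^+ 3 < L%:R] /\
  [/\ ~ ((2 * J / (lam + h)) \is a Num.int),
      ~ ((2 * J / (lam - h)) \is a Num.int),
      ~ ((2 * J + lam - h) / (lam + h) \is a Num.int)
    & ~ ((J + lam + h) / h \is a Num.int)].

Definition has_zero_line (L : nat) (eta : site L -> int) : Prop :=
  (exists c : 'I_L, forall r : 'I_L, eta (r, c) = 0) \/
  (exists r : 'I_L, forall c : 'I_L, eta (r, c) = 0).

From mathcomp Require Import all_boot all_order all_algebra.
From mathcomp Require Import reals.
From mathcomp Require Import zify ring lra.
Import Order.TTheory GRing.Theory Num.Theory.
Set Implicit Arguments. Unset Strict Implicit. Unset Printing Implicit Defensive.
Local Open Scope ring_scope.

(* Write H = J C - lam N - h (2 n - N), where N counts the non-zero spins, n the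
   +1 spins, and C is the integer bond cost: the sum over all rows and columns of
   Lambda of the squared jumps along the line, padded with 0 at both ends (the
   boundary condition).  A line carrying a non-zero spin costs at least 2, so
   C(eta) >= 2 x + 2 y where x, y count the rows and columns on which eta does not
   vanish; moreover N(eta) <= x y, and a zero line forces x < L or y < L.  The
   competitor is the quasi-square zeta with k (k + 1) plus spins (k + 1 = l_c) in a
   sea of minus spins, for which N(zeta) = L^2 and C(zeta) <= 4 L + 8 k + 4.  Since
   H(eta) - H(zeta) = J (C(eta) - C(zeta)) + (lam - h) (L^2 - N(eta)), an elementary
   bound on 2 J (x + y) - (lam - h) x y over the box gives
   H(eta) - H(zeta) >= (lam - h) L - J (8 k + 6) > 0 as soon as J exceeds an
   explicit threshold and L > (2 J / (lam - h))^3. *)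

Lemma sum_indicator n m (X : nat -> int) :
  \sum_(d < n) (d == m :> nat)%:R * X d = (m < n)%:R * X m.
Proof.
elim: n => [|n IH]; first by rewrite big_ord0 mul0r.
rewrite big_ord_recr /= IH.
case: (n =P m) => [->|nm]; first by rewrite ltnn ltnSn mul0r mul1r add0r.
rewrite mul0r addr0.
by have -> : (m < n.+1)%N = (m < n)%N by apply/idP/idP; lia.
Qed.

Lemma sum_indicator_le1 n m : \sum_(d < n) (d == m :> nat)%:R <= 1 :> int.
Proof.
have := sum_indicator n m (fun _ => 1).
under eq_bigr do rewrite mulr1.
by move=> ->; rewrite mulr1; case: (m < n)%N.
Qed.

Lemma sum_delta n (a : 'I_n) (X : 'I_n -> int) :
  \sum_(c < n) (a == c :> nat)%:R * X c = X a.
Proof.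
rewrite (bigD1 a) //= eqxx mul1r big1 ?addr0 // => c ne_ca.
have /negbTE -> : (a : nat) != c by rewrite eq_sym; exact: ne_ca.
by rewrite mul0r.
Qed.

Lemma telescope_sq (G : nat -> int) (m n : nat) : (m <= n)%N ->
  `|G m - G n| <= \sum_(m <= k < n) (G k - G k.+1) ^+ 2.
Proof.
elim: n => [|n IH] le_mn; first by move: le_mn; rewrite leqn0 => /eqP ->; rewrite big_geq // subrr normr0.
case: (ltngtP m n.+1) => [lt_mn||->]; last by rewrite big_geq // subrr normr0.
- rewrite big_nat_recr //=; have := IH lt_mn.
  have : `|G n - G n.+1| <= (G n - G n.+1) ^+ 2.
    by move: (G n - G n.+1) => z; rewrite expr2; nia.
  move: (\sum_(m <= k < n) _) ((G n - G n.+1) ^+ 2) => S t; lia.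
- by rewrite ltnNge le_mn.
Qed.

Lemma sum_site L (G : site L -> int) :
  \sum_(i : site L) G i = \sum_(a < L) \sum_(b < L) G (a, b).
Proof. by rewrite pair_big /=; apply: eq_bigr => -[a b]. Qed.

Lemma card_as_sum (T : finType) (P : pred T) : (#|P|%:R : int) = \sum_(i : T) (P i)%:R.
Proof.
rewrite -sum1_card natr_sum big_mkcond /=; apply: eq_bigr => i _.
by rewrite unfold_in; case: (P i).
Qed.

Lemma count_lt L k : \sum_(a < L) (a < k)%:R = (minn k L)%:R :> int.
Proof.
elim: L => [|L IH]; first by rewrite big_ord0 minn0.
by rewrite big_ord_recr /= IH -natrD; congr (_%:R); case: (ltnP L k) => /=; lia.
Qed.

Section LineCost.
Variable n : nat.
Implicit Type g : nat -> int.

Definition pad g (k : nat) : int := if (0 < k <= n)%N then g k.-1 else 0.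

Definition line_cost g : int := \sum_(k < n.+1) (pad g k - pad g k.+1) ^+ 2.

(* A line leaving 0 must come back to 0: it costs at least 2. *)
Lemma line_cost_ge2 g b : (b < n)%N -> g b != 0 -> 2 <= line_cost g.
Proof.
move=> lt_bn nz.
rewrite /line_cost -(big_mkord xpredT (fun k => (pad g k - pad g k.+1) ^+ 2)).
rewrite (big_cat_nat (leq0n b.+1)) ?leqW //=.
have left := telescope_sq (pad g) (leq0n b.+1).
have right := telescope_sq (pad g) (leqW lt_bn).
have pad_b : pad g b.+1 = g b by rewrite /pad lt_bn.
have pad_0 : pad g 0 = 0 by [].
have pad_n : pad g n.+1 = 0 by rewrite /pad ltnn andbF.
rewrite pad_b pad_0 pad_n in left right.
have : 0 < `|g b| by rewrite normr_gt0.
move: (\sum_(0 <= k < b.+1) _) (\sum_(b.+1 <= k < n.+1) _) left right => S1 S2; lia.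
Qed.

(* A line of +1 spins followed by -1 spins (or all -1 spins unless P) has one
   jump and two ends, hence costs at most 2 + 4 P. *)
Lemma line_cost_step (P : bool) t :
  line_cost (fun b => if P && (b < t)%N then 1 else -1) <= 2 + 4 * P%:R.
Proof.
apply: le_trans (_ : \sum_(k < n.+1)
   ((k == 0%N :> nat)%:R + (k == n :> nat)%:R + 4 * P%:R * (k == t :> nat)%:R) <= _).
  apply: ler_sum => -[j lt_jn] _; rewrite /pad /=.
  by case: P; do ! case: ifP; lia.
rewrite !big_split /= -mulr_sumr -[2 + _]/(1 + 1 + 4 * P%:R) -[X in _ <= _ + X]mulr1.
apply: lerD; first by apply: lerD; apply: sum_indicator_le1.
by apply: ler_wpM2l; [case: P | apply: sum_indicator_le1].
Qed.

Definition ext (f : 'I_n -> int) (b : nat) : int := if insub b is Some o then f o else 0.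

Lemma ext_ord f (b : 'I_n) : ext f b = f b.
Proof. by rewrite /ext valK. Qed.

Lemma line_cost_ext f g : (forall b : 'I_n, f b = g b) -> line_cost (ext f) = line_cost g.
Proof.
move=> fg; apply: eq_bigr => k _; rewrite /pad.
have pad_eq j : (0 < j <= n)%N -> ext f j.-1 = g j.-1.
  by case: j => // j /= lt_jn; rewrite -[j]/(val (Ordinal lt_jn)) ext_ord fg.
by do 2 case: ifP => [/pad_eq ->|] //.
Qed.
End LineCost.

Lemma line_cost_ge0 n (g : nat -> int) : 0 <= line_cost n g.
Proof. by apply: sumr_ge0 => k _; apply: sqr_ge0. Qed.

(* The cost of a line in graph form: internal nearest-neighbour bonds plus the two
   end sites, which face the zero boundary. *)
Lemma line_cost_graph n (f : 'I_n -> int) :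
  line_cost n (ext f) =
    \sum_(b < n) \sum_(d < n) (d == b.+1 :> nat)%:R * (f b - f d) ^+ 2
    + \sum_(b < n) ((b == 0%N :> nat) + (b == n.-1 :> nat))%:R * f b ^+ 2.
Proof.
set G := ext f.
under eq_bigr => b _ do under eq_bigr => d _ do rewrite -[f b]ext_ord -[f d]ext_ord -/G.
under eq_bigr => b _ do rewrite (sum_indicator n b.+1 (fun d => (G b - G d) ^+ 2)).
under [X in _ + X]eq_bigr => b _ do rewrite -[f b]ext_ord -/G natrD mulrDl.
rewrite big_split /= (sum_indicator n 0 (fun d => G d ^+ 2))
  (sum_indicator n n.-1 (fun d => G d ^+ 2)) /line_cost.
case: n f G => [|m] f G; first by rewrite big_ord1 big_ord0 /pad !mul0r !addr0 expr0n.
rewrite big_ord_recl big_ord_recr [in RHS]big_ord_recr /= ltnn ltnSn !mul0r !mul1r addr0.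
have pad_in k : (k < m.+1)%N -> pad m.+1 G k.+1 = G k by rewrite /pad => ->.
have pad_out : pad m.+1 G m.+2 = 0 by rewrite /pad ltnn andbF.
rewrite pad_out pad_in // [pad m.+1 G 0]/pad /= sub0r subr0 sqrrN.
under eq_bigr => k _ do rewrite !pad_in ?ltnS ?(ltnW (ltn_ord k)) ?ltn_ord //.
under [X in _ = X + _]eq_bigr => k _ do rewrite ltnS (ltn_ord k) mul1r.
by rewrite /bump !add1n pad_in // addrCA addrA.
Qed.

Definition hbond L (i j : site L) : bool := (i.1 == j.1 :> nat) && (j.2 == i.2.+1 :> nat).
Definition vbond L (i j : site L) : bool := (i.2 == j.2 :> nat) && (j.1 == i.1.+1 :> nat).

Lemma adj_bonds L (i j : site L) :
  (adj i j : nat) = (hbond i j + hbond j i + vbond i j + vbond j i)%N.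
Proof.
case: i j => [a b] [c d]; rewrite /adj /hbond /vbond /pos /=.
move: (val a) (val b) (val c) (val d) => x y z w.
have shift p q : p%:Z + 1 - (q%:Z + 1) = p%:Z - q%:Z by lia.
by rewrite !shift; case: (ltngtP x z); case: (ltngtP y w); lia.
Qed.

Section Bonds.
Variables (L : nat) (e : site L -> int).

Definition bond_energy (bond : site L -> site L -> bool) : int :=
  \sum_(i : site L) \sum_(j : site L) (bond i j)%:R * (e i - e j) ^+ 2.

(* Each unordered bond appears twice in the adjacency sum of H. *)
Lemma adj_energy :
  \sum_(i : site L) \sum_(j | adj i j) (e i - e j) ^+ 2
  = 2 * (bond_energy (@hbond L) + bond_energy (@vbond L)).
Proof.
have reverse (bond : site L -> site L -> bool) :
    bond_energy (fun i j => bond j i) = bond_energy bond.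
  rewrite /bond_energy exchange_big; apply: eq_bigr => i _; apply: eq_bigr => j _.
  by rewrite -sqrrN opprB.
have -> : \sum_(i : site L) \sum_(j | adj i j) (e i - e j) ^+ 2
    = bond_energy (@hbond L) + bond_energy (fun i j => hbond j i)
      + bond_energy (@vbond L) + bond_energy (fun i j => vbond j i).
  rewrite /bond_energy -!big_split /=; apply: eq_bigr => i _.
  rewrite big_mkcond -!big_split /=; apply: eq_bigr => j _.
  by rewrite -!mulrDl -!natrD -adj_bonds; case: (adj i j); rewrite ?mul1r ?mul0r.
by rewrite (reverse (@hbond L)) (reverse (@vbond L)); ring.
Qed.

Lemma hbond_rows : bond_energy (@hbond L) =
  \sum_(a < L) \sum_(b < L) \sum_(d < L) (d == b.+1 :> nat)%:R * (e (a, b) - e (a, d)) ^+ 2.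
Proof.
rewrite /bond_energy sum_site; apply: eq_bigr => a _.
under eq_bigr => b _ do (rewrite sum_site; under eq_bigr => c _ do
  (under eq_bigr => d _ do rewrite /hbond /= -mulnb natrM -mulrA; rewrite -mulr_sumr)).
by under eq_bigr => b _ do rewrite sum_delta.
Qed.

Lemma vbond_cols : bond_energy (@vbond L) =
  \sum_(b < L) \sum_(a < L) \sum_(c < L) (c == a.+1 :> nat)%:R * (e (a, b) - e (c, b)) ^+ 2.
Proof.
rewrite /bond_energy sum_site exchange_big; apply: eq_bigr => b _; apply: eq_bigr => a _.
rewrite sum_site.
by under eq_bigr => c _ do (under eq_bigr => d _ do rewrite /vbond /= -mulnb natrM -mulrA;
  rewrite sum_delta).
Qed.

Lemma n_out_eq (i : site L) : n_out i =
  ((i.1 == 0 :> nat) + (i.1 == L.-1 :> nat) + (i.2 == 0 :> nat) + (i.2 == L.-1 :> nat))%N.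
Proof.
case: i => a b; rewrite /n_out /nbrs /inLam /pos /=.
have := ltn_ord a; have := ltn_ord b; move: (val a) (val b) => x y lt_yL lt_xL.
by case: (x =P 0%N); case: (x =P L.-1); case: (y =P 0%N); case: (y =P L.-1) => /=; lia.
Qed.

Lemma boundary_energy :
  \sum_(i : site L | inner_bd i) \sum_(q <- nbrs (pos i) | ~~ inLam L q) e i ^+ 2
  = \sum_(i : site L) (n_out i)%:R * e i ^+ 2.
Proof.
rewrite big_mkcond /=; apply: eq_bigr => i _.
rewrite big_const_seq -/(n_out i) iter_addr_0 mulr_natl /inner_bd.
by case: (n_out i) => [|m]; rewrite ?mulr0n.
Qed.

Definition cost : int :=
  \sum_(a < L) line_cost L (ext (fun b => e (a, b)))
  + \sum_(b < L) line_cost L (ext (fun a => e (a, b))).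

Lemma cost_bonds : cost =
  bond_energy (@hbond L) + bond_energy (@vbond L) + \sum_(i : site L) (n_out i)%:R * e i ^+ 2.
Proof.
rewrite /cost hbond_rows vbond_cols.
under eq_bigr do rewrite line_cost_graph.
under [X in _ + X]eq_bigr do rewrite line_cost_graph.
rewrite !big_split /= -!addrA; congr (_ + _); rewrite addrCA; congr (_ + _).
rewrite sum_site [X in _ + X]exchange_big -big_split; apply: eq_bigr => a _.
rewrite -big_split; apply: eq_bigr => b _ /=.
by rewrite n_out_eq /= !natrD; ring.
Qed.

Lemma Ham_cost (R : realType) (J lam h : R) :
  Ham J lam h e = J * cost%:~R - lam * (\sum_(i : site L) e i ^+ 2)%:~R
                  - h * (\sum_(i : site L) e i)%:~R.
Proof.
have bonds : \sum_(i : site L) \sum_(j | adj i j) ((e i - e j) ^+ 2)%:~R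
    = 2 * (bond_energy (@hbond L) + bond_energy (@vbond L))%:~R :> R.
  by rewrite -[2]/(2%:~R) -rmorphM -adj_energy !rmorph_sum; apply: eq_bigr => i _; rewrite rmorph_sum.
have boundary : \sum_(i : site L | inner_bd i) \sum_(q <- nbrs (pos i) | ~~ inLam L q) ((e i) ^+ 2)%:~R
    = (\sum_(i : site L) (n_out i)%:R * e i ^+ 2)%:~R :> R.
  by rewrite -boundary_energy !rmorph_sum; apply: eq_bigr => i _; rewrite rmorph_sum.
rewrite /Ham bonds boundary cost_bonds !rmorphD /=.
by congr (_ - _ - _); [field | rewrite rmorph_sum..].
Qed.
End Bonds.

Lemma card_ord_missing n (P : pred 'I_n) (c : 'I_n) : ~~ P c -> (#|P| < n)%N.
Proof.
move=> nPc; rewrite -[n in (_ < n)%N]card_ord; apply: proper_card.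
by apply/properP; split; [apply/subsetP | exists c].
Qed.

Section Configurations.
Variables (L : nat) (e : site L -> int).

Definition support := [pred i : site L | e i != 0].
Definition busy_rows := [pred a : 'I_L | [exists b, e (a, b) != 0]].
Definition busy_cols := [pred b : 'I_L | [exists a, e (a, b) != 0]].

Lemma config_sq : is_config e -> \sum_(i : site L) e i ^+ 2 = #|support|%:R.
Proof.
move=> conf; rewrite card_as_sum; apply: eq_bigr => i _ /=.
by move: (conf i); rewrite !inE => /or3P [] /eqP ->.
Qed.

Lemma config_sum : is_config e ->
  \sum_(i : site L) e i = 2 * (n_plus e)%:R - #|support|%:R.
Proof.
move=> conf; rewrite /n_plus !card_as_sum mulr_sumr -sumrB; apply: eq_bigr => i _ /=.
by move: (conf i); rewrite !inE => /or3P [] /eqP ->.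
Qed.

Lemma busy_line_cost (f : 'I_L -> int) : 2 * [exists b, f b != 0]%:R <= line_cost L (ext f).
Proof.
case: existsP => [[b nz]|_]; last by rewrite mulr0 line_cost_ge0.
by rewrite mulr1; apply: (line_cost_ge2 (ltn_ord b)); rewrite ext_ord.
Qed.

Lemma cost_ge_busy : 2 * #|busy_rows|%:R + 2 * #|busy_cols|%:R <= cost e.
Proof.
rewrite !card_as_sum !mulr_sumr; apply: lerD; apply: ler_sum => a _; exact: busy_line_cost.
Qed.

(* Non-zero spins sit at the crossings of busy rows and busy columns. *)
Lemma support_le_busy : (#|support| <= #|busy_rows| * #|busy_cols|)%N.
Proof.
rewrite -cardX; apply: subset_leq_card; apply/subsetP => -[a b]; rewrite !inE /= => nz.
by apply/andP; split; apply/existsP; [exists b | exists a].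
Qed.

Lemma zero_line_busy : has_zero_line e ->
  (#|busy_rows| < L)%N \/ (#|busy_cols| < L)%N.
Proof.
case=> [[c zero_c]|[r zero_r]]; [right; apply: (@card_ord_missing _ busy_cols c)
  | left; apply: (@card_ord_missing _ busy_rows r)];
  by rewrite /= negb_exists; apply/forallP => x; rewrite ?zero_c ?zero_r eqxx.
Qed.
End Configurations.

Lemma gated_lines_cost L (P : 'I_L -> bool) (t : nat) (f : 'I_L -> 'I_L -> int) :
  (forall a b, f a b = if P a && (b < t)%N then 1 else -1) ->
  \sum_(a < L) line_cost L (ext (f a)) <= 2 * L%:R + 4 * \sum_(a < L) (P a)%:R.
Proof.
move=> def_f; have -> : 2 * L%:R = \sum_(a < L) 2 :> int by rewrite sumr_const card_ord mulr_natr.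
rewrite mulr_sumr -big_split /=.
apply: ler_sum => a _; rewrite (line_cost_ext (g := fun b => if P a && (b < t)%N then 1 else -1)) //.
exact: line_cost_step.
Qed.

Section QuasiSquare.
Variables (L r c : nat).

Definition quasi_square : site L -> int :=
  fun i => if (i.1 < r)%N && (i.2 < c)%N then 1 else -1.

Lemma quasi_square_config : is_config quasi_square.
Proof. by move=> i; rewrite /quasi_square; case: ifP. Qed.

Lemma quasi_square_support : #|support quasi_square| = (L * L)%N.
Proof. by rewrite eq_card_prod ?card_ord // => i; rewrite !inE /quasi_square; case: ifP. Qed.

Lemma quasi_square_n_plus : n_plus quasi_square = (minn r L * minn c L)%N.
Proof.
apply/eqP; rewrite -(eqr_nat int) card_as_sum sum_site natrM -!count_lt mulr_suml.
apply/eqP; apply: eq_bigr => a _; rewrite mulr_sumr; apply: eq_bigr => b _.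
by rewrite /= /quasi_square /=; case: (a < r)%N; case: (b < c)%N.
Qed.

(* Its rows and columns are step lines: C <= 4 L + 4 r + 4 c. *)
Lemma quasi_square_cost : cost quasi_square <= 4 * L%:R + 4 * r%:R + 4 * c%:R.
Proof.
have rows := @gated_lines_cost L (fun a => a < r)%N c (fun a b => quasi_square (a, b)).
have cols := @gated_lines_cost L (fun b => b < c)%N r (fun b a => quasi_square (a, b)).
rewrite /cost; apply: le_trans (lerD (rows _) (cols _)) _; rewrite ?count_lt //.
  by move=> b a; rewrite /quasi_square andbC.
have := geq_minl r L; have := geq_minl c L; lia.
Qed.
End QuasiSquare.
Arguments quasi_square : clear implicits.

Section Arithmetic.
Variable R : realType.
Implicit Types d h J l k x y : R.

(* On the box [0, l] x [0, l - 1], the quadratic 2 J (x + y) - d x y + d l^2 - 4 J l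
   is minimal at the corner (l, l - 1), where it equals d l - 2 J, when 8 J <= d (l - 1). *)
Lemma bilinear_bound x y l d J : 0 <= x -> x <= l -> 0 <= y -> y <= l - 1 ->
  8 * J <= d * (l - 1) -> 0 <= J -> 0 < d ->
  d * l - 2 * J <= 2 * J * (x + y) - d * x * y + d * l ^+ 2 - 4 * J * l.
Proof.
move=> x_ge0 x_le y_ge0 y_le bond_le J_ge0 d_gt0.
set a := l - x; set b := l - 1 - y.
have a_ge0 : 0 <= a by rewrite /a; lra.
have b_ge0 : 0 <= b by rewrite /b; lra.
suff key : 2 * J * (a + b) <= d * (a * (l - 1 - b) + b * l) by rewrite /a /b in key; nra.
have b_le : b <= l - 1 by rewrite /b; lra.
have a_le : a <= l by rewrite /a; lra.
case: (lerP (2 * b) (l - 1)) => b_half.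
- have h1 : a * (l - 1) <= 2 * (a * (l - 1 - b)) by nra.
  have h2 : 8 * J * a <= d * (l - 1) * a by nra.
  have h3 : 8 * J * b <= d * (l - 1) * b by nra.
  nra.
- have h1 : l * (l - 1) <= 2 * (b * l) by nra.
  have h2 : 0 <= a * (l - 1 - b) by nra.
  have h3 : 8 * J * l <= d * (l - 1) * l by nra.
  nra.
Qed.

Lemma zero_line_gap d J l k x y N Ce Cz :
  0 < d -> 0 <= J -> 8 * J <= d * (l - 1) -> J * (8 * k + 6) < d * l ->
  0 <= x -> x <= l -> 0 <= y -> y <= l -> x + 1 <= l \/ y + 1 <= l ->
  N <= x * y -> 2 * x + 2 * y <= Ce -> Cz <= 4 * l + 8 * k + 4 ->
  0 < J * (Ce - Cz) + d * (l ^+ 2 - N).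
Proof.
move=> d_gt0 J_ge0 bond_le gap x_ge0 x_le y_ge0 y_le short N_le Ce_ge Cz_le.
have bil : d * l - 2 * J <= 2 * J * (x + y) - d * x * y + d * l ^+ 2 - 4 * J * l.
  case: short => short.
    have x_le' : x <= l - 1 by lra.
    have := bilinear_bound y_ge0 y_le x_ge0 x_le' bond_le J_ge0 d_gt0; nra.
  have y_le' : y <= l - 1 by lra.
  exact: bilinear_bound.
have cost_gap : J * (2 * x + 2 * y - (4 * l + 8 * k + 4)) <= J * (Ce - Cz).
  by rewrite ler_wpM2l //; lra.
have vol_gap : d * (l ^+ 2 - x * y) <= d * (l ^+ 2 - N) by rewrite ler_pM2l //; lra.
nra.
Qed.

Definition coupling_threshold d h : R := 1 + d + d ^+ 2 * (1 / h + d / (2 * h) + 1).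

Lemma large_volume d J l T : 0 < d -> 0 < T -> d ^+ 2 * T <= J -> (2 * J / d) ^+ 3 < l ->
  8 * J ^+ 2 * T < d * l.
Proof.
move=> d_gt0 T_gt0 JT l_large.
have J_gt0 : 0 < J by apply: lt_le_trans JT; rewrite mulr_gt0 // exprn_gt0.
have cube : 8 * J ^+ 3 < d ^+ 3 * l.
  have -> : 8 * J ^+ 3 = (2 * J / d) ^+ 3 * d ^+ 3 by rewrite expr_div_n; field; lra.
  by rewrite mulrC ltr_pM2l ?exprn_gt0.
rewrite -(ltr_pM2l (exprn_gt0 2 d_gt0)).
have : 8 * J ^+ 2 * (d ^+ 2 * T) <= 8 * J ^+ 2 * J by rewrite ler_pM2l ?mulr_gt0 ?exprn_gt0.
have -> : d ^+ 2 * (d * l) = d ^+ 3 * l by ring.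
nra.
Qed.

Lemma coupling_threshold_ge1 d h : 0 < d -> 0 < h -> 1 <= coupling_threshold d h.
Proof.
move=> d_gt0 h_gt0; rewrite /coupling_threshold.
have : 0 <= d ^+ 2 * (1 / h + d / (2 * h) + 1).
  by rewrite mulr_ge0 ?sqr_ge0 // !addr_ge0 ?divr_ge0 ?mulr_ge0 // ltW.
lra.
Qed.

Lemma large_coupling d h J l k : 0 < d -> 0 < h -> coupling_threshold d h < J ->
  (2 * J / d) ^+ 3 < l -> 0 <= k -> k <= (2 * J + d) / (2 * h) ->
  [/\ 8 * J <= d * (l - 1), J * (8 * k + 6) < d * l & k + 1 < l].
Proof.
rewrite /coupling_threshold => d_gt0 h_gt0 J_large l_large k_ge0 k_le.
set T := 1 / h + d / (2 * h) + 1 in J_large.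
have inv_h : 0 <= 1 / h by rewrite divr_ge0 // ltW.
have d_h : 0 <= d / (2 * h) by rewrite divr_ge0 // ltW // mulr_gt0.
have T_ge1 : 1 <= T by rewrite /T; lra.
have dT : 0 <= d ^+ 2 * T by apply: mulr_ge0; [apply: sqr_ge0 | lra].
have J_ge1 : 1 <= J by lra.
have J_gt_d : d < J by lra.
have JT : d ^+ 2 * T <= J by lra.
have vol := large_volume d_gt0 (lt_le_trans ltr01 T_ge1) JT l_large.
have hk : 2 * h * k <= 2 * J + d by move: k_le; rewrite ler_pdivlMr ?mulr_gt0 // mulrC.
have crit : J * (8 * k + 6) <= 8 * J ^+ 2 * T.
  rewrite -(ler_pM2l h_gt0).
  have -> : h * (8 * J ^+ 2 * T) = 8 * J ^+ 2 + 4 * J ^+ 2 * d + 8 * h * J ^+ 2.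
    by rewrite /T; field; lra.
  have p1 : J * (2 * h * k) <= J * (2 * J + d) by rewrite ler_pM2l //; lra.
  have p2 : J * d <= J ^+ 2 * d by rewrite ler_pM2r // expr2; nra.
  have p3 : h * J <= h * J ^+ 2 by rewrite ler_pM2l // expr2; nra.
  nra.
split; nra.
Qed.
End Arithmetic.

Lemma critical_length (R : realType) (J lam h : R) : 0 < h -> 0 <= 2 * J + lam - h ->
  exists k : nat, n_c_plus J lam h = (k.+1 * k)%N /\ k%:R <= (2 * J + (lam - h)) / (2 * h).
Proof.
move=> h_gt0 num_ge0.
have q_ge0 : 0 <= (2 * J + lam - h) / (2 * h) by rewrite divr_ge0 // ltW // mulr_gt0.
have [k floor_k] : exists k : nat, Num.floor ((2 * J + lam - h) / (2 * h)) = k.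
  by move: (floor_ge0 ((2 * J + lam - h) / (2 * h))); rewrite q_ge0; case: Num.floor => // k; exists k.
exists k; split; first by rewrite /n_c_plus /l_c floor_k; lia.
by have := floor_le ((2 * J + lam - h) / (2 * h)); rewrite floor_k addrA.
Qed.

Lemma Ham_gap (R : realType) (J lam h : R) L (eta zeta : site L -> int) :
  is_config eta -> is_config zeta -> n_plus eta = n_plus zeta ->
  Ham J lam h eta - Ham J lam h zeta =
  J * ((cost eta)%:~R - (cost zeta)%:~R)
  + (lam - h) * (#|support zeta|%:R - #|support eta|%:R).
Proof.
move=> eta_conf zeta_conf same_n.
rewrite !Ham_cost (config_sq eta_conf) (config_sq zeta_conf) (config_sum eta_conf)
  (config_sum zeta_conf) same_n !(rmorphB, rmorphM) /= !rmorph_nat.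
ring.
Qed.

Lemma zero_line_beaten (R : realType) (J lam h : R) L k (eta : site L -> int) :
  0 < lam - h -> 0 <= J -> 8 * J <= (lam - h) * (L%:R - 1) ->
  J * (8 * k%:R + 6) < (lam - h) * L%:R ->
  is_config eta -> has_zero_line eta -> n_plus eta = n_plus (quasi_square L k k.+1) ->
  Ham J lam h (quasi_square L k k.+1) < Ham J lam h eta.
Proof.
move=> d_gt0 J_ge0 bond_le gap eta_conf zero_line same_n.
rewrite -subr_gt0 Ham_gap //; last exact: quasi_square_config.
rewrite quasi_square_support natrM -expr2.
apply: (zero_line_gap (k := k%:R) (x := #|busy_rows eta|%:R) (y := #|busy_cols eta|%:R)) => //.
- by rewrite ler_nat -[X in (_ <= X)%N]card_ord max_card.
- by rewrite ler_nat -[X in (_ <= X)%N]card_ord max_card.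
- by case: (zero_line_busy zero_line) => short; [left | right]; rewrite natr1 ler_nat.
- by have := support_le_busy eta; rewrite -(ler_nat R) natrM.
- by have := cost_ge_busy eta; rewrite -(ler_int R) !(rmorphD, rmorphM, rmorph_nat).
- have := quasi_square_cost L k k.+1; rewrite -(ler_int R) !(rmorphD, rmorphM, rmorph_nat) -natr1.
  by move/le_trans; apply; lra.
Qed.

Theorem lemma4p9 (R : realType) (lam h : R) :
  0 < lam -> 0 < h -> lam / 2 < h -> h < lam ->
  exists J0 : R, forall (J : R) (L : nat), J0 < J -> cond_C J lam h L ->
    forall eta : site L -> int,
      in_M (n_c_plus J lam h) eta -> has_zero_line eta ->
      ~ is_minimizer J lam h (n_c_plus J lam h) eta.
Proof.
move=> _ h_gt0 _ h_lt_lam; have d_gt0 : 0 < lam - h by rewrite subr_gt0.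
exists (coupling_threshold (lam - h) h) => J L J_large [[_ _ L_large] _] eta.
move=> [eta_conf eta_n] zero_line [_ eta_min].
have J_ge1 := le_lt_trans (coupling_threshold_ge1 d_gt0 h_gt0) J_large.
have num_ge0 : 0 <= 2 * J + lam - h by lra.
have [k [n_c k_le]] := critical_length h_gt0 num_ge0.
have [bond_le gap k_lt_L] := large_coupling d_gt0 h_gt0 J_large L_large (ler0n _ k) k_le.
have kL : (k.+1 < L)%N by rewrite -(ltr_nat R) -natr1.
have zeta_M : in_M (n_c_plus J lam h) (quasi_square L k k.+1).
  split; first exact: quasi_square_config.
  rewrite quasi_square_n_plus n_c (minn_idPl (ltnW (ltnW kL))) (minn_idPl (ltnW kL)).
  by rewrite mulnC.
have same_n : n_plus eta = n_plus (quasi_square L k k.+1).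
  by case: zeta_M => _; rewrite -eta_n => -[].
apply/negP: (eta_min _ zeta_M); rewrite -ltNge.
apply: zero_line_beaten => //; lra.
Qed.
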